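(* Let $\mathbf{A}=\langle A,\wedge,\vee,\cdot,1,0,{\sim},-,'\rangle$ be a quasi relation algebra that is $n$-periodic for some odd natural number $n$, and let $m$ be an odd natural number. (i) If $m\le n$, then $\mathbf{A}\cong\mathbf{A}^{\triangledown m}$ via the map $a\mapsto -^{n-m}a$, and $\mathbf{A}\cong\mathbf{A}^{\vartriangle m}$ via the map $a\mapsto{\sim}^{n-m}a$. (ii) If $m>n$, then $\mathbf{A}\cong\mathbf{A}^{\triangledown m}$ via the map $a\mapsto{\sim}^{m-n}a$, and $\mathbf{A}\cong\mathbf{A}^{\vartriangle m}$ via the map $a\mapsto -^{m-n}a$.
   Context: An FL-algebra $\langle A,\wedge,\vee,\cdot,1,\backslash,/,0\rangle$ is a residuated lattice (a lattice, a monoid $\langle A,\cdot,1\rangle$, with $a\cdot b\le c \iff a\le c/b\iff b\le a\backslash c$) with an arbitrary constant $0$. Define ${\sim}a=a\backslash 0$, $-a=0/a$, $a+b={\sim}(-b\cdot -a)$. It is an InFL-algebra if ${\sim}{-}a={-}{\sim}a=a$ for all $a$. A quasi relation algebra (qRA) is an InFL-algebra with a unary operation $'$ with $a''=a$, $(a\vee b)'=a'\wedge b'$, $({\sim}a)'=-(a')$, $(a\cdot b)'=a'+b'$; signature $\langle A,\wedge,\vee,\cdot,1,0,{\sim},-,'\rangle$. ${\sim}^k a$, $-^k a$ are $k$-fold applications. The qRA is $n$-periodic if $n$ is the smallest positive integer with ${\sim}^n a=-^n a$ for all $a\in A$. For $k\in\omega$, $\mathbf{A}^{\triangledown k}$ (resp.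 $\mathbf{A}^{\vartriangle k}$) is the algebra $\langle A,\wedge,\vee,\cdot,1,0,{\sim},-,{}^{\triangledown k}\rangle$ (resp. with ${}^{\vartriangle k}$), where $a^{\triangledown k}={\sim}^{2k}(a')$ and $a^{\vartriangle k}=-^{2k}(a')$; these are qRAs. *)

From Stdlib Require Import Arith PeanoNat.

Record ops (A : Type) := Ops {
  meet : A -> A -> A;
  join : A -> A -> A;
  mul  : A -> A -> A;
  one  : A;
  zero : A;
  ldiv : A -> A -> A;
  rdiv : A -> A -> A;
  dual : A -> A
}.
Arguments Ops {A}.
Arguments meet {A}. Arguments join {A}. Arguments mul {A}. Arguments one {A}.
Arguments zero {A}. Arguments ldiv {A}. Arguments rdiv {A}. Arguments dual {A}.

Section Defs.
Context {A : Type} (O : ops A).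

Definition le (a b : A) : Prop := meet O a b = a.
(* ~a = a \ 0,  -a = 0 / a,  a + b = ~(-b . -a) *)
Definition tneg (a : A) : A := ldiv O a (zero O).
Definition mneg (a : A) : A := rdiv O (zero O) a.
Definition plus (a b : A) : A := tneg (mul O (mneg b) (mneg a)).

Definition is_lattice : Prop :=
  (forall a b c, meet O a (meet O b c) = meet O (meet O a b) c) /\
  (forall a b c, join O a (join O b c) = join O (join O a b) c) /\
  (forall a b, meet O a b = meet O b a) /\
  (forall a b, join O a b = join O b a) /\
  (forall a b, meet O a (join O a b) = a) /\
  (forall a b, join O a (meet O a b) = a).

Definition is_monoid : Prop :=
  (forall a b c, mul O a (mul O b c) = mul O (mul O a b) c) /\
  (forall a, mul O (one O) a = a) /\
  (forall a, mul O a (one O) = a).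

Definition is_residuated : Prop :=
  forall a b c,
    (le (mul O a b) c <-> le a (rdiv O c b)) /\
    (le (mul O a b) c <-> le b (ldiv O a c)).

(* FL-algebra: residuated lattice with arbitrary constant 0 *)
Definition is_FL : Prop := is_lattice /\ is_monoid /\ is_residuated.

Definition is_InFL : Prop :=
  is_FL /\ forall a, tneg (mneg a) = a /\ mneg (tneg a) = a.

Definition is_qRA : Prop :=
  is_InFL /\
  (forall a, dual O (dual O a) = a) /\
  (forall a b, dual O (join O a b) = meet O (dual O a) (dual O b)) /\
  (forall a, dual O (tneg a) = mneg (dual O a)) /\
  (forall a b, dual O (mul O a b) = plus (dual O a) (dual O b)).

Definition tneg_k (k : nat) (a : A) : A := Nat.iter k tneg a.
Definition mneg_k (k : nat) (a : A) : A := Nat.iter k mneg a.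

Definition periodic (n : nat) : Prop :=
  0 < n /\ (forall a, tneg_k n a = mneg_k n a) /\
  (forall k, 0 < k < n -> ~ (forall a, tneg_k k a = mneg_k k a)).

(* A^{triangledown k}: same reduct, ' replaced by a |-> ~^{2k}(a') *)
Definition down (k : nat) : ops A :=
  Ops (meet O) (join O) (mul O) (one O) (zero O) (ldiv O) (rdiv O)
      (fun a => tneg_k (2 * k) (dual O a)).
(* A^{vartriangle k}: ' replaced by a |-> -^{2k}(a') *)
Definition up (k : nat) : ops A :=
  Ops (meet O) (join O) (mul O) (one O) (zero O) (ldiv O) (rdiv O)
      (fun a => mneg_k (2 * k) (dual O a)).
End Defs.

Definition qRA_iso {A B : Type} (O1 : ops A) (O2 : ops B) (f : A -> B) : Prop :=
  (exists g : B -> A, (forall a, g (f a) = a) /\ (forall b, f (g b) = b)) /\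
  (forall a b, f (meet O1 a b) = meet O2 (f a) (f b)) /\
  (forall a b, f (join O1 a b) = join O2 (f a) (f b)) /\
  (forall a b, f (mul O1 a b) = mul O2 (f a) (f b)) /\
  f (one O1) = one O2 /\
  f (zero O1) = zero O2 /\
  (forall a, f (tneg O1 a) = tneg O2 (f a)) /\
  (forall a, f (mneg O1 a) = mneg O2 (f a)) /\
  (forall a, f (dual O1 a) = dual O2 (f a)).

(* In an involutive FL-algebra ~ and - are mutually inverse order-reversing
   bijections, and x <= ~y, y x <= 0 and y <= -x are equivalent; hence ~~ is an
   automorphism of the reduct without ', and so is every even power f of ~ or -.
   Since (~a)' = -(a'), such an f satisfies f(a') = ~^(2m)((f a)') exactly when
   ~^(2m) = f∘f, and f(a') = -^(2m)((f a)') exactly when -^(2m) = f∘f.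
   Periodicity gives ~^(2n) = -^(2n) = id, from which these identities follow
   for the maps of the statement. Oddness of n and m only serves to make n - m
   even. *)

From Stdlib Require Import Arith PeanoNat Lia.

Section Algebra.
Context {A : Type} (O : ops A).

Lemma tneg_k_add p q a : tneg_k O (p + q) a = tneg_k O p (tneg_k O q a).
Proof. apply Nat.iter_add. Qed.

Lemma mneg_k_add p q a : mneg_k O (p + q) a = mneg_k O p (mneg_k O q a).
Proof. apply Nat.iter_add. Qed.

Record InFL_hom (f : A -> A) : Prop := {
  hom_meet : forall a b, f (meet O a b) = meet O (f a) (f b);
  hom_join : forall a b, f (join O a b) = join O (f a) (f b);
  hom_mul : forall a b, f (mul O a b) = mul O (f a) (f b);
  hom_one : f (one O) = one O;
  hom_zero : f (zero O) = zero O;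
  hom_tneg : forall a, f (tneg O a) = tneg O (f a);
  hom_mneg : forall a, f (mneg O a) = mneg O (f a)
}.

Lemma InFL_hom_id : InFL_hom (fun a => a).
Proof. constructor; reflexivity. Qed.

Lemma InFL_hom_comp f g : InFL_hom f -> InFL_hom g -> InFL_hom (fun a => f (g a)).
Proof.
  intros Hf Hg; constructor; intros;
    rewrite ?(hom_meet g), ?(hom_join g), ?(hom_mul g), ?(hom_one g),
      ?(hom_zero g), ?(hom_tneg g), ?(hom_mneg g); auto;
    rewrite ?(hom_meet f), ?(hom_join f), ?(hom_mul f), ?(hom_one f),
      ?(hom_zero f), ?(hom_tneg f), ?(hom_mneg f); auto.
Qed.

Lemma InFL_hom_ext f g : (forall a, f a = g a) -> InFL_hom f -> InFL_hom g.
Proof.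
  intros E Hf; constructor; intros; rewrite <- !E;
    auto using hom_meet, hom_join, hom_mul, hom_one, hom_zero, hom_tneg, hom_mneg.
Qed.

Lemma InFL_hom_inv f g :
  InFL_hom f -> (forall a, g (f a) = a) -> (forall a, f (g a) = a) -> InFL_hom g.
Proof.
  intros Hf gK fK.
  assert (f_inj : forall x y, f x = f y -> x = y).
  { intros x y Exy. rewrite <- (gK x), <- (gK y), Exy. reflexivity. }
  constructor; intros; apply f_inj;
    rewrite ?(hom_meet f), ?(hom_join f), ?(hom_mul f), ?(hom_one f),
      ?(hom_zero f), ?(hom_tneg f), ?(hom_mneg f), ?fK; auto.
Qed.

Lemma qRA_iso_of_InFL_hom (d : A -> A) f g :
  InFL_hom f -> (forall a, g (f a) = a) -> (forall a, f (g a) = a) ->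
  (forall a, f (dual O a) = d (f a)) ->
  qRA_iso O (Ops (meet O) (join O) (mul O) (one O) (zero O) (ldiv O) (rdiv O) d) f.
Proof.
  intros Hf gK fK Hd.
  repeat split; try exact (ex_intro _ g (conj gK fK)); apply Hf || apply Hd.
Qed.

Section Lattice.
Hypothesis Hlat : is_lattice O.

Lemma meet_assoc a b c : meet O a (meet O b c) = meet O (meet O a b) c.
Proof. exact (proj1 Hlat a b c). Qed.
Lemma join_assoc a b c : join O a (join O b c) = join O (join O a b) c.
Proof. exact (proj1 (proj2 Hlat) a b c). Qed.
Lemma meet_comm a b : meet O a b = meet O b a.
Proof. exact (proj1 (proj2 (proj2 Hlat)) a b). Qed.
Lemma join_comm a b : join O a b = join O b a.
Proof. exact (proj1 (proj2 (proj2 (proj2 Hlat))) a b). Qed.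
Lemma meet_join_absorb a b : meet O a (join O a b) = a.
Proof. exact (proj1 (proj2 (proj2 (proj2 (proj2 Hlat)))) a b). Qed.
Lemma join_meet_absorb a b : join O a (meet O a b) = a.
Proof. exact (proj2 (proj2 (proj2 (proj2 (proj2 Hlat)))) a b). Qed.

Lemma meet_idem a : meet O a a = a.
Proof.
  rewrite <- (join_meet_absorb a a) at 2. apply meet_join_absorb.
Qed.

Lemma join_idem a : join O a a = a.
Proof.
  rewrite <- (meet_join_absorb a a) at 2. apply join_meet_absorb.
Qed.

Lemma le_refl a : le O a a.
Proof. apply meet_idem. Qed.

Lemma le_antisym a b : le O a b -> le O b a -> a = b.
Proof. unfold le; intros Hab Hba. rewrite <- Hab, meet_comm. exact Hba. Qed.

Lemma le_iff_join a b : le O a b <-> join O a b = b.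
Proof.
  unfold le; split; intro E.
  - rewrite <- E, join_comm, meet_comm. apply join_meet_absorb.
  - rewrite <- E. apply meet_join_absorb.
Qed.

Lemma le_meet x a b : le O x (meet O a b) <-> le O x a /\ le O x b.
Proof.
  unfold le; split.
  - intro E; rewrite <- E; split.
    + rewrite <- !meet_assoc, (meet_comm b a), (meet_assoc a a b), meet_idem.
      reflexivity.
    + rewrite <- !meet_assoc, meet_idem. reflexivity.
  - intros [Ea Eb]. rewrite meet_assoc, Ea, Eb. reflexivity.
Qed.

Lemma join_le a b x : le O (join O a b) x <-> le O a x /\ le O b x.
Proof.
  rewrite !le_iff_join; split.
  - intro E; rewrite <- E; split.
    + rewrite !join_assoc, join_idem. reflexivity.
    + rewrite (join_comm a b), !join_assoc, join_idem. reflexivity.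
  - intros [Ea Eb]. rewrite <- join_assoc, Eb, Ea. reflexivity.
Qed.

Lemma eq_of_le_lower p q : (forall x, le O x p <-> le O x q) -> p = q.
Proof. intro H. apply le_antisym; [apply H | apply H]; apply le_refl. Qed.

Lemma eq_of_le_upper p q : (forall x, le O p x <-> le O q x) -> p = q.
Proof. intro H. apply le_antisym; [apply H | apply H]; apply le_refl. Qed.

Lemma order_iso_meet f g :
  (forall a, f (g a) = a) -> (forall a b, le O (f a) (f b) <-> le O a b) ->
  forall a b, f (meet O a b) = meet O (f a) (f b).
Proof.
  intros fK Hle a b. apply eq_of_le_lower. intro x.
  rewrite le_meet, <- (fK x), !Hle. apply le_meet.
Qed.

Lemma order_iso_join f g :
  (forall a, f (g a) = a) -> (forall a b, le O (f a) (f b) <-> le O a b) ->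
  forall a b, f (join O a b) = join O (f a) (f b).
Proof.
  intros fK Hle a b. apply eq_of_le_upper. intro x.
  rewrite join_le, <- (fK x), !Hle. apply join_le.
Qed.

End Lattice.

Section InFL.
Hypothesis HF : is_InFL O.
Let Hlat : is_lattice O := proj1 (proj1 HF).

Lemma mul_assoc a b c : mul O a (mul O b c) = mul O (mul O a b) c.
Proof. exact (proj1 (proj1 (proj2 (proj1 HF))) a b c). Qed.
Lemma mul_1l a : mul O (one O) a = a.
Proof. exact (proj1 (proj2 (proj1 (proj2 (proj1 HF)))) a). Qed.
Lemma mul_1r a : mul O a (one O) = a.
Proof. exact (proj2 (proj2 (proj1 (proj2 (proj1 HF)))) a). Qed.
Lemma mul_le_rdiv a b c : le O (mul O a b) c <-> le O a (rdiv O c b).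
Proof. exact (proj1 (proj2 (proj2 (proj1 HF)) a b c)). Qed.
Lemma mul_le_ldiv a b c : le O (mul O a b) c <-> le O b (ldiv O a c).
Proof. exact (proj2 (proj2 (proj2 (proj1 HF)) a b c)). Qed.
Lemma tneg_mneg a : tneg O (mneg O a) = a.
Proof. exact (proj1 (proj2 HF a)). Qed.
Lemma mneg_tneg a : mneg O (tneg O a) = a.
Proof. exact (proj2 (proj2 HF a)). Qed.

Lemma le_tneg x v : le O x (tneg O v) <-> le O (mul O v x) (zero O).
Proof. symmetry. apply mul_le_ldiv. Qed.

Lemma le_mneg x v : le O x (mneg O v) <-> le O (mul O x v) (zero O).
Proof. symmetry. apply mul_le_rdiv. Qed.

Lemma tneg_le a b : le O (tneg O a) (tneg O b) <-> le O b a.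
Proof. rewrite le_tneg, <- le_mneg, mneg_tneg. reflexivity. Qed.

Lemma tneg_one : tneg O (one O) = zero O.
Proof. apply (eq_of_le_lower Hlat). intro x. rewrite le_tneg, mul_1l. reflexivity. Qed.

Lemma mneg_one : mneg O (one O) = zero O.
Proof. apply (eq_of_le_lower Hlat). intro x. rewrite le_mneg, mul_1r. reflexivity. Qed.

(* Both sides say p (q r) <= 0, using ~p = -(~~p). *)
Lemma mul_le_zero_rotate p q r :
  le O (mul O (mul O p q) r) (zero O) <->
  le O (mul O (mul O q r) (tneg O (tneg O p))) (zero O).
Proof.
  rewrite <- mul_assoc, <- le_tneg, <- le_mneg, mneg_tneg. reflexivity.
Qed.

Lemma tneg2_mul_le a b z :
  le O (mul O a b) z <->
  le O (mul O (tneg O (tneg O a)) (tneg O (tneg O b))) (tneg O (tneg O z)).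
Proof.
  rewrite <- (tneg_mneg z) at 1.
  rewrite le_tneg, mul_assoc, 3!mul_le_zero_rotate, <- mul_assoc, <- le_tneg,
    tneg_mneg.
  reflexivity.
Qed.

Lemma tneg2_hom : InFL_hom (fun a => tneg O (tneg O a)).
Proof.
  assert (tneg2K : forall a, tneg O (tneg O (mneg O (mneg O a))) = a).
  { intro a. rewrite !tneg_mneg. reflexivity. }
  assert (tneg2_le : forall a b,
            le O (tneg O (tneg O a)) (tneg O (tneg O b)) <-> le O a b).
  { intros a b. rewrite !tneg_le. reflexivity. }
  constructor.
  - exact (order_iso_meet Hlat (fun a => tneg O (tneg O a)) _ tneg2K tneg2_le).
  - exact (order_iso_join Hlat (fun a => tneg O (tneg O a)) _ tneg2K tneg2_le).
  - intros a b. apply (eq_of_le_upper Hlat). intro w.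
    rewrite <- (tneg2K w), tneg2_le, <- tneg2_mul_le. reflexivity.
  - rewrite tneg_one, <- mneg_one, tneg_mneg. reflexivity.
  - rewrite <- mneg_one at 1. rewrite tneg_mneg. apply tneg_one.
  - reflexivity.
  - intro a. rewrite tneg_mneg, mneg_tneg. reflexivity.
Qed.

Lemma tneg_kK k a : tneg_k O k (mneg_k O k a) = a.
Proof.
  unfold tneg_k, mneg_k. revert a; induction k as [|k IH]; intro a; [reflexivity|].
  rewrite Nat.iter_succ_r. simpl. rewrite tneg_mneg. apply IH.
Qed.

Lemma mneg_kK k a : mneg_k O k (tneg_k O k a) = a.
Proof.
  unfold tneg_k, mneg_k. revert a; induction k as [|k IH]; intro a; [reflexivity|].
  rewrite Nat.iter_succ_r. simpl. rewrite mneg_tneg. apply IH.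
Qed.

Lemma tneg_k_hom k : Nat.Even k -> InFL_hom (tneg_k O k).
Proof.
  intros [j ->]. induction j as [|j IH]; [exact InFL_hom_id|].
  apply (InFL_hom_ext (fun a => tneg O (tneg O (tneg_k O (2 * j) a)))).
  - intro a. replace (2 * S j) with (2 + 2 * j) by lia. symmetry. apply tneg_k_add.
  - exact (InFL_hom_comp _ _ tneg2_hom IH).
Qed.

Lemma mneg_k_hom k : Nat.Even k -> InFL_hom (mneg_k O k).
Proof. intro Hk. exact (InFL_hom_inv _ _ (tneg_k_hom k Hk) (mneg_kK k) (tneg_kK k)). Qed.

Lemma tneg_k_period_twice n :
  (forall a, tneg_k O n a = mneg_k O n a) -> forall a, tneg_k O (n + n) a = a.
Proof. intros Hper a. rewrite tneg_k_add, Hper. apply mneg_kK. Qed.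

Lemma mneg_k_period_twice n :
  (forall a, tneg_k O n a = mneg_k O n a) -> forall a, mneg_k O (n + n) a = a.
Proof. intros Hper a. rewrite mneg_k_add, <- Hper. apply tneg_kK. Qed.

Lemma tneg_k_complement N i :
  (forall a, tneg_k O N a = a) -> i <= N -> forall a, tneg_k O i a = mneg_k O (N - i) a.
Proof.
  intros HN Hi a. rewrite <- (HN (mneg_k O (N - i) a)).
  replace N with (i + (N - i)) at 1 by lia.
  rewrite tneg_k_add, tneg_kK. reflexivity.
Qed.

Lemma mneg_k_complement N i :
  (forall a, mneg_k O N a = a) -> i <= N -> forall a, mneg_k O i a = tneg_k O (N - i) a.
Proof.
  intros HN Hi a. rewrite <- (HN (tneg_k O (N - i) a)).
  replace N with (i + (N - i)) at 1 by lia.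
  rewrite mneg_k_add, mneg_kK. reflexivity.
Qed.

End InFL.

Section qRA.
Hypothesis HQ : is_qRA O.
Let HF : is_InFL O := proj1 HQ.

Lemma dual_tneg a : dual O (tneg O a) = mneg O (dual O a).
Proof. exact (proj1 (proj2 (proj2 (proj2 HQ))) a). Qed.

Lemma dual_mneg a : dual O (mneg O a) = tneg O (dual O a).
Proof.
  rewrite <- (tneg_mneg HF (dual O (mneg O a))), <- dual_tneg, (tneg_mneg HF).
  reflexivity.
Qed.

Lemma dual_tneg_k k a : dual O (tneg_k O k a) = mneg_k O k (dual O a).
Proof.
  unfold tneg_k, mneg_k. induction k as [|k IH]; [reflexivity|].
  simpl. rewrite dual_tneg, IH. reflexivity.
Qed.

Lemma dual_mneg_k k a : dual O (mneg_k O k a) = tneg_k O k (dual O a).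
Proof.
  unfold tneg_k, mneg_k. induction k as [|k IH]; [reflexivity|].
  simpl. rewrite dual_mneg, IH. reflexivity.
Qed.

Lemma qRA_iso_down_mneg_k m k :
  Nat.Even k -> (forall a, tneg_k O (2 * m) a = mneg_k O (2 * k) a) ->
  qRA_iso O (down O m) (mneg_k O k).
Proof.
  intros Hk Hm.
  apply qRA_iso_of_InFL_hom with (g := tneg_k O k);
    [apply (mneg_k_hom HF k Hk) | apply (tneg_kK HF) | apply (mneg_kK HF) | intro a].
  rewrite dual_mneg_k, Hm. replace (2 * k) with (k + k) by lia.
  rewrite mneg_k_add, (mneg_kK HF). reflexivity.
Qed.

Lemma qRA_iso_down_tneg_k m k :
  Nat.Even k -> (forall a, tneg_k O (2 * m) a = tneg_k O (2 * k) a) ->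
  qRA_iso O (down O m) (tneg_k O k).
Proof.
  intros Hk Hm.
  apply qRA_iso_of_InFL_hom with (g := mneg_k O k);
    [apply (tneg_k_hom HF k Hk) | apply (mneg_kK HF) | apply (tneg_kK HF) | intro a].
  rewrite dual_tneg_k, Hm. replace (2 * k) with (k + k) by lia.
  rewrite tneg_k_add, (tneg_kK HF). reflexivity.
Qed.

Lemma qRA_iso_up_tneg_k m k :
  Nat.Even k -> (forall a, mneg_k O (2 * m) a = tneg_k O (2 * k) a) ->
  qRA_iso O (up O m) (tneg_k O k).
Proof.
  intros Hk Hm.
  apply qRA_iso_of_InFL_hom with (g := mneg_k O k);
    [apply (tneg_k_hom HF k Hk) | apply (mneg_kK HF) | apply (tneg_kK HF) | intro a].
  rewrite dual_tneg_k, Hm. replace (2 * k) with (k + k) by lia.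
  rewrite tneg_k_add, (tneg_kK HF). reflexivity.
Qed.

Lemma qRA_iso_up_mneg_k m k :
  Nat.Even k -> (forall a, mneg_k O (2 * m) a = mneg_k O (2 * k) a) ->
  qRA_iso O (up O m) (mneg_k O k).
Proof.
  intros Hk Hm.
  apply qRA_iso_of_InFL_hom with (g := tneg_k O k);
    [apply (mneg_k_hom HF k Hk) | apply (tneg_kK HF) | apply (mneg_kK HF) | intro a].
  rewrite dual_mneg_k, Hm. replace (2 * k) with (k + k) by lia.
  rewrite mneg_k_add, (mneg_kK HF). reflexivity.
Qed.

End qRA.
End Algebra.

Theorem proposition2p6 (A : Type) (O : ops A) (n m : nat) :
  is_qRA O -> periodic O n -> Nat.Odd n -> Nat.Odd m ->
  (m <= n ->
     qRA_iso O (down O m) (mneg_k O (n - m)) /\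
     qRA_iso O (up O m) (tneg_k O (n - m))) /\
  (n < m ->
     qRA_iso O (down O m) (tneg_k O (m - n)) /\
     qRA_iso O (up O m) (mneg_k O (m - n))).
Proof.
  intros HQ [_ [Hper _]] Hn Hm.
  pose proof (tneg_k_period_twice O (proj1 HQ) n Hper) as T.
  pose proof (mneg_k_period_twice O (proj1 HQ) n Hper) as U.
  split; intro Hmn.
  - assert (Hk : Nat.Even (n - m))
      by (destruct Hn as [a ?], Hm as [b ?]; exists (a - b); lia).
    split.
    + apply (qRA_iso_down_mneg_k O HQ); [exact Hk | intro a].
      rewrite (tneg_k_complement O (proj1 HQ) (n + n)) by (exact T || lia).
      f_equal. lia.
    + apply (qRA_iso_up_tneg_k O HQ); [exact Hk | intro a].
      rewrite (mneg_k_complement O (proj1 HQ) (n + n)) by (exact U || lia).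
      f_equal. lia.
  - assert (Hk : Nat.Even (m - n))
      by (destruct Hn as [a ?], Hm as [b ?]; exists (b - a); lia).
    split.
    + apply (qRA_iso_down_tneg_k O HQ); [exact Hk | intro a].
      replace (2 * m) with (2 * (m - n) + (n + n)) by lia.
      rewrite tneg_k_add, T. reflexivity.
    + apply (qRA_iso_up_mneg_k O HQ); [exact Hk | intro a].
      replace (2 * m) with (2 * (m - n) + (n + n)) by lia.
      rewrite mneg_k_add, U. reflexivity.
Qed.
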